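(* Let $H=(V,E,w)$ be a hypergraph and let $L,R\subset V$ be disjoint sets with $\mathrm{vol}(L\cup R)>0$. Then $$\gamma_1\le 2\beta_H(L,R),$$ where $\gamma_1=\min\{D(f): f\in\mathbb{R}^n,\ \sum_{v}\deg(v)f(v)^2>0\}$ and $D(f)=\frac{\sum_{e\in E}w(e)\big(\max_{u\in e}f(u)+\min_{v\in e}f(v)\big)^2}{\sum_{v\in V}\deg(v)f(v)^2}$.
   Context: A hypergraph $H=(V,E,w)$ has vertex set $V$ with $|V|=n$, hyperedges $E$ (subsets of $V$), weights $w:E\to\mathbb{R}_{>0}$; $\deg(v)=\sum_{e\ni v}w(e)$, $\mathrm{vol}(S)=\sum_{v\in S}\deg(v)$. For $A,B,C\subseteq V$, $w(A,B\mid C)=\sum_{e\in E}w(e)[e\cap A\ne\emptyset\wedge e\cap B\ne\emptyset\wedge e\cap C=\emptyset]$ and $w(A\mid C)=w(A,A\mid C)$. Writing $\overline{X}=V\setminus X$, the bipartiteness ratio of disjoint $L,R$ is $\beta_H(L,R)=\frac{2w(L\mid\overline{L})+2w(R\mid\overline{R})+w(L,\overline{L\cup R}\mid R)+w(R,\overline{L\cup R}\mid L)}{\mathrm{vol}(L\cup R)}$. The quantity $\gamma_1$ is the smallest eigenvalue of the paper's hypergraph operator $D_H^{-1}J_H$. *)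

From HB Require Import structures.
From mathcomp Require Import all_boot all_order all_algebra.
From mathcomp Require Import classical_sets reals.
Set Implicit Arguments. Unset Strict Implicit. Unset Printing Implicit Defensive.
Import Order.TTheory GRing.Theory Num.Theory.
Local Open Scope ring_scope.

Section Hypergraph.
Variables (R : realType) (V E : finType) (edge : E -> {set V}) (w : E -> R).

Definition hdeg (v : V) : R := \sum_(e : E | v \in edge e) w e.

Definition hvol (S : {set V}) : R := \sum_(v in S) hdeg v.

Definition wABC (A B C : {set V}) : R :=
  \sum_(e : E | [&& edge e :&: A != finset.set0, edge e :&: B != finset.set0 & edge e :&: C == finset.set0]) w e.

Definition wAC (A C : {set V}) : R := wABC A A C.

Definition beta_H (L Rs : {set V}) : R :=
  (2 * wAC L (~: L) + 2 * wAC Rs (~: Rs)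
   + wABC L (~: (L :|: Rs)) Rs + wABC Rs (~: (L :|: Rs)) L) / hvol (L :|: Rs).

(* max_{u in e} f(u) and min_{v in e} f(v) (meaningful for nonempty e; 0 otherwise) *)
Definition emax (f : V -> R) (e : E) : R :=
  if [pick u in edge e] is Some u0 then \big[Num.max/f u0]_(u in edge e) f u else 0.
Definition emin (f : V -> R) (e : E) : R :=
  if [pick u in edge e] is Some u0 then \big[Num.min/f u0]_(u in edge e) f u else 0.

Definition Dden (f : V -> R) : R := \sum_(v : V) hdeg v * f v ^+ 2.

Definition Dquot (f : V -> R) : R :=
  (\sum_(e : E) w e * (emax f e + emin f e) ^+ 2) / Dden f.

(* gamma_1 = min { D(f) : sum_v deg(v) f(v)^2 > 0 } (stated as the infimum,
   which coincides with the minimum, which is attained) *)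
Definition gamma1 : R :=
  inf [set Dquot f | f in [set f : V -> R | 0 < Dden f]]%classic.

End Hypergraph.

(** The signed indicator f = 1_L - 1_R is an admissible test vector: its
    denominator is vol(L ∪ R), and on every hyperedge max f + min f only takes
    the values 0, ±1, ±2.  It is ±2 exactly when the edge lies inside L (or R),
    which is counted with weight 2 in the numerator of beta, and ±1 exactly when
    the edge meets L (or R) and the outside of L ∪ R but not the other side,
    counted there with weight 1.  Hence D(f) <= 2 beta(L, R). *)
From HB Require Import structures.
From mathcomp Require Import classical_sets reals.
From mathcomp Require Import all_boot all_order all_algebra.
From mathcomp Require Import lra.
Set Implicit Arguments. Unset Strict Implicit. Unset Printing Implicit Defensive.
Import Order.TTheory GRing.Theory Num.Theory.
Local Open Scope ring_scope.

Section EdgeExtrema.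
Variables (R : realType) (V E : finType) (edge : E -> {set V}).
Implicit Types (f : V -> R) (e : E).

Lemma emax_attained f e : edge e != set0 ->
  exists2 u, u \in edge e & emax edge f e = f u.
Proof.
move=> /set0Pn[v ve]; rewrite /emax; case: pickP => [u0 u0e|]; last by move/(_ v); rewrite ve.
apply: (big_ind (fun x => exists2 u, u \in edge e & x = f u)) => [|x y|u ue].
- by exists u0.
- by move=> [a ae ->] [b be ->]; case: leP => _; [exists b | exists a].
- by exists u.
Qed.

Lemma le_emax f e u : u \in edge e -> f u <= emax edge f e.
Proof.
move=> ue; rewrite /emax; case: pickP => [u0 _|]; last by move/(_ u); rewrite ue.
by rewrite (bigD1 u) //= le_max lexx.
Qed.

Lemma emin_attained f e : edge e != set0 ->
  exists2 u, u \in edge e & emin edge f e = f u.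
Proof.
move=> /set0Pn[v ve]; rewrite /emin; case: pickP => [u0 u0e|]; last by move/(_ v); rewrite ve.
apply: (big_ind (fun x => exists2 u, u \in edge e & x = f u)) => [|x y|u ue].
- by exists u0.
- by move=> [a ae ->] [b be ->]; case: leP => _; [exists a | exists b].
- by exists u.
Qed.

Lemma emin_le f e u : u \in edge e -> emin edge f e <= f u.
Proof.
move=> ue; rewrite /emin; case: pickP => [u0 _|]; last by move/(_ u); rewrite ue.
by rewrite (bigD1 u) //= ge_min lexx.
Qed.

Lemma emax_eq f e u x : u \in edge e -> f u = x ->
  {in edge e, forall v, f v <= x} -> emax edge f e = x.
Proof.
move=> ue fux lex; have /(emax_attained f)[v ve fv] : edge e != set0 by apply/set0Pn; exists u.
by apply/eqP; rewrite eq_le {1}fv lex //= -fux le_emax.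
Qed.

Lemma emin_oppE f g e : edge e != set0 -> g =1 (fun v => - f v) ->
  emin edge f e = - emax edge g e.
Proof.
move=> ne gE; have [u ue fu] := emin_attained f ne.
rewrite (@emax_eq _ _ u (- emin edge f e)) ?opprK // => [|v ve]; first by rewrite gE fu.
by rewrite gE lerN2 emin_le.
Qed.

End EdgeExtrema.

Lemma setI_setC_eq0 (V : finType) (S A B : {set V}) : [disjoint A & B] ->
  (S :&: ~: A == set0) = (S :&: B == set0) && (S :&: ~: (A :|: B) == set0).
Proof.
move=> dAB; rewrite -setU_eq0 -setIUr; congr (S :&: _ == _).
apply/setP => v; rewrite !inE; case: (boolP (v \in A)) => /= [vA|_].
  by rewrite (disjointFr dAB vA).
by rewrite orbN.
Qed.

Section Hypergraph.
Variables (R : realType) (V E : finType) (edge : E -> {set V}) (w : E -> R).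
Implicit Types (A B C : {set V}) (e : E).

Definition crossing A B C e : bool :=
  [&& edge e :&: A != set0, edge e :&: B != set0 & edge e :&: C == set0].

Lemma wABC_sum A B C : wABC edge w A B C = \sum_e w e * (crossing A B C e)%:R.
Proof.
rewrite /wABC big_mkcond; apply: eq_bigr => e _.
by rewrite /crossing; case: ifP; rewrite ?mulr1 ?mulr0.
Qed.

Lemma gamma1_le_Dquot f : (forall e, 0 <= w e) ->
  0 < Dden edge w f -> gamma1 edge w <= Dquot edge w f.
Proof.
move=> w_ge0 f_adm; apply: ge_inf; last by exists f.
exists 0 => _ [g g_adm <-]; rewrite /Dquot divr_ge0 ?(ltW g_adm) //.
by apply: sumr_ge0 => e _; rewrite mulr_ge0 ?sqr_ge0.
Qed.

Definition signvec A B (v : V) : R :=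
  if v \in A then 1 else if v \in B then -1 else 0.

Lemma signvecC A B : [disjoint A & B] -> signvec A B =1 (fun v => - signvec B A v).
Proof.
move=> dAB v; rewrite /signvec; case: (boolP (v \in A)) => [vA|_].
  by rewrite (disjointFr dAB vA) opprK.
by case: (v \in B); rewrite ?oppr0.
Qed.

Lemma Dden_signvec A B : [disjoint A & B] -> Dden edge w (signvec A B) = hvol edge w (A :|: B).
Proof.
move=> dAB; rewrite /Dden /hvol [RHS]big_mkcond; apply: eq_bigr => v _.
rewrite /signvec inE; case: ifPn => [vA|_]; first by rewrite expr1n mulr1.
by case: ifP => _; rewrite ?sqrrN ?expr1n ?mulr1 // expr0n mulr0.
Qed.

Lemma emax_signvec A B e : edge e != set0 ->
  emax edge (signvec A B) e =
    if edge e :&: A != set0 then 1 else if edge e :&: ~: (A :|: B) != set0 then 0 else -1.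
Proof.
move=> ne; have fA v : v \notin A -> signvec A B v <= 0.
  by rewrite /signvec => /negPf->; case: ifP => _; lra.
case: (boolP (edge e :&: A == set0)) => [eA0|/set0Pn[u /setIP[ue uA]]] /=; last first.
  apply: (emax_eq ue); first by rewrite /signvec uA.
  by move=> v _; rewrite /signvec; case: ifP => _; [|case: ifP => _]; lra.
have notA v : v \in edge e -> v \notin A.
  by move=> ve; apply/negP => vA; move/eqP/setP/(_ v): eA0; rewrite !inE ve vA.
case: (boolP (edge e :&: ~: (A :|: B) == set0)) => [eO0|/set0Pn[u /setIP[ue]]] /=; last first.
  rewrite !inE negb_or => /andP[uA uB].
  by apply: (emax_eq ue) => [|v /notA/fA//]; rewrite /signvec (negPf uA) (negPf uB).
have inB v : v \in edge e -> v \in B.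
  move=> ve; apply/negPn/negP => vB; move/eqP/setP/(_ v): eO0.
  by rewrite !inE ve (negPf (notA v ve)) (negPf vB).
have signB v : v \in edge e -> signvec A B v = -1.
  by move=> ve; rewrite /signvec (negPf (notA v ve)) inB.
have /set0Pn[u ue] := ne.
by apply: (emax_eq ue (signB u ue)) => v /signB->.
Qed.

Lemma signvec_edge_bound A B e : [disjoint A & B] -> edge e != set0 ->
  (emax edge (signvec A B) e + emin edge (signvec A B) e) ^+ 2 <=
  2 * (2 * (crossing A A (~: A) e)%:R + 2 * (crossing B B (~: B) e)%:R
       + (crossing A (~: (A :|: B)) B e)%:R + (crossing B (~: (A :|: B)) A e)%:R).
Proof.
move=> dAB ne; have dBA : [disjoint B & A] by rewrite disjoint_sym.
rewrite (emin_oppE ne (signvecC dBA)) !emax_signvec // /crossing.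
rewrite (setI_setC_eq0 _ dAB) (setI_setC_eq0 _ dBA) [B :|: A]setUC.
by case: (edge e :&: A == set0); case: (edge e :&: B == set0);
  case: (edge e :&: ~: (A :|: B) == set0) => /=; lra.
Qed.

End Hypergraph.

Theorem lemma13 (R : realType) (V E : finType) (edge : E -> {set V}) (w : E -> R)
  (hw : forall e, 0 < w e) (hne : forall e, edge e != finset.set0)
  (L Rs : {set V}) (hdisj : [disjoint L & Rs])
  (hvolpos : 0 < hvol edge w (L :|: Rs)) :
  gamma1 edge w <= 2 * beta_H edge w L Rs.
Proof.
have w_ge0 e : 0 <= w e by exact: ltW.
have Dden_pos : 0 < Dden edge w (signvec R L Rs) by rewrite Dden_signvec.
apply: le_trans (gamma1_le_Dquot w_ge0 Dden_pos) _.
rewrite /Dquot /beta_H Dden_signvec // mulrA ler_pM2r ?invr_gt0 //.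
rewrite /wAC !wABC_sum !mulr_sumr -!big_split mulr_sumr /=.
apply: ler_sum => e _.
have := ler_wpM2l (w_ge0 e) (signvec_edge_bound R hdisj (hne e)).
lra.
Qed.
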